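(* Let $G$ and $H$ be finite simple graphs, let $k\ge 0$ be an integer, and let $\delta_H$ be the minimum degree of $H$. If $S_G$ is a global defensive $k$-alliance in $G$, then $S_G\times V_H$ is a global defensive $(k\,n(H)+\delta_H)$-alliance in the lexicographic product $G[H]$. Consequently, $$\gamma^d_{k n(H)+\delta_H}(G[H])\le n(H)\,\gamma^d_k(G).$$
   Context: All graphs are finite and simple; $n(H)=|V_H|$. For $S\subseteq V_G$ and $v\in V_G$, $N_S(v)=\{u\in S: uv\in E_G\}$ and $\bar S=V_G\setminus S$. For an integer $k$, a nonempty $S\subseteq V_G$ is a global defensive $k$-alliance in $G$ if every vertex outside $S$ has a neighbor in $S$ and $|N_S(v)|\ge |N_{\bar S}(v)|+k$ for every $v\in S$; $\gamma^d_k(G)$ is the minimum size of such a set ($\infty$ if none exists). The lexicographic product $G[H]$ has vertex set $V_G\times V_H$, with $(g_1,h_1)\sim(g_2,h_2)$ iff $g_1g_2\in E_G$, or $g_1=g_2$ and $h_1h_2\in E_H$. *)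

From mathcomp Require Import all_boot.
Set Implicit Arguments. Unset Strict Implicit. Unset Printing Implicit Defensive.

(* A finite simple graph: vertex set a finType T, edge relation e : rel T
   that is symmetric and irreflexive (stated as hypotheses where used). *)

Definition nbh_in (T : finType) (e : rel T) (S : {set T}) (v : T) : {set T} :=
  [set u in S | e v u].

Definition is_gda (T : finType) (e : rel T) (k : nat) (S : {set T}) : bool :=
  [&& S != set0,
      [forall v, (v \notin S) ==> [exists u in S, e v u]] &
      [forall v in S, #|nbh_in e (~: S) v| + k <= #|nbh_in e S v| ]].

(* gamma^d_k(G) : None encodes infinity (no such alliance exists). *)
Definition gda_number (T : finType) (e : rel T) (k : nat) : option nat :=
  let A := [set S : {set T} | is_gda e k S] in
  if A == set0 then None else Some (\big[minn/#|T|]_(S in A) #|S|).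

Definition le_inf (a b : option nat) : bool :=
  match a, b with
  | _, None => true
  | None, Some _ => false
  | Some x, Some y => x <= y
  end.

Definition mul_inf (n : nat) (a : option nat) : option nat := omap (muln n) a.

Definition deg (T : finType) (e : rel T) (v : T) : nat := #|[set u | e v u]|.
Definition min_deg (T : finType) (e : rel T) : nat :=
  \big[minn/#|T|]_(v : T) deg e v.

Definition lexprod (TG TH : finType) (eG : rel TG) (eH : rel TH) : rel (TG * TH) :=
  fun x y => eG x.1 y.1 || ((x.1 == y.1) && eH x.2 y.2).

(* A vertex (g, h) of S_G x V_H keeps all of its own fibre's H-neighbours inside the set, and
   every G-neighbour g' of g contributes a whole fibre {g'} x V_H, inside or outside the set
   according to g'.  Hence its inside degree is at least n(H) |N_S(g)| + deg h and its outside
   degree is at most n(H) |N_{~S}(g)|, so the k-alliance inequality at g scales by n(H) and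
   gains deg h >= delta_H.  Domination and nonemptiness lift fibrewise. *)

From mathcomp Require Import all_boot.

Set Implicit Arguments.
Unset Strict Implicit.
Unset Printing Implicit Defensive.

Lemma bigmin_leq (T : finType) (P : pred T) (F : T -> nat) (d : nat) (x : T) :
  P x -> \big[minn/d]_(v | P v) F v <= F x.
Proof.
move=> Px; have : x \in index_enum T by rewrite mem_index_enum.
elim: (index_enum T) => //= a r IHr; rewrite in_cons big_cons.
case/orP=> [/eqP <-|xr]; first by rewrite Px geq_minl.
by case: (P a); [apply: leq_trans (geq_minr _ _) (IHr xr) | apply: IHr].
Qed.

Lemma min_deg_le (T : finType) (e : rel T) (v : T) : min_deg e <= deg e v.
Proof. exact: bigmin_leq. Qed.

Section GdaNumber.

Variables (T : finType) (e : rel T) (k : nat).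

Lemma gda_number_le (S : {set T}) : is_gda e k S -> le_inf (gda_number e k) (Some #|S|).
Proof.
move=> gdaS; have SA : S \in [set S | is_gda e k S] by rewrite inE.
rewrite /gda_number; case: eqP => [A0|_ /=]; first by rewrite A0 inE in SA.
exact: bigmin_leq.
Qed.

Lemma gda_number_attained m :
  gda_number e k = Some m -> exists2 S, is_gda e k S & #|S| <= m.
Proof.
rewrite /gda_number; case: eqP => // /eqP /set0Pn [S0 S0A] [<-].
case: (arg_minnP (fun S : {set T} => #|S|) S0A) => S gdaS Smin.
exists S; first by have : S \in [set S | is_gda e k S] := gdaS; rewrite inE.
apply: (big_ind (fun x => #|S| <= x)) => //; first exact: max_card.
by move=> x y Sx Sy; rewrite leq_min Sx Sy.
Qed.

End GdaNumber.

Section LexprodAlliance.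

Variables (TG TH : finType) (eG : rel TG) (eH : rel TH).
Hypothesis irrG : irreflexive eG.

Local Notation eGH := (lexprod eG eH).

Lemma lexprod_nbh_compl_sub (S : {set TG}) g h : g \in S ->
  nbh_in eGH (~: setX S [set: TH]) (g, h) \subset setX (nbh_in eG (~: S) g) [set: TH].
Proof.
move=> gS; apply/subsetP => -[g' h']; rewrite !inE /lexprod /= andbT.
case/andP=> g'S /orP[egg' | /andP[/eqP gg' _]]; first by rewrite g'S egg'.
by move: g'S; rewrite -gg' gS.
Qed.

(* The fibre {g} x N_H(h) is disjoint from N_S(g) x V_H because eG is irreflexive. *)
Lemma lexprod_nbh_in_card (S : {set TG}) g h : g \in S ->
  #|nbh_in eG S g| * #|TH| + deg eH h <= #|nbh_in eGH (setX S [set: TH]) (g, h)|.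
Proof.
move=> gS; set fibre := [set (g, h') | h' in [set u | eH h u]].
have fibre_card : #|fibre| = deg eH h by rewrite card_imset // => ? ? [].
have disjoint_fibre : setX (nbh_in eG S g) [set: TH] :&: fibre = set0.
  apply/setP => -[g' h']; rewrite !inE; apply/negbTE/andP => -[].
  by case/andP=> /andP[_ eg'] _ /imsetP[? _ [gg' _]]; rewrite gg' irrG in eg'.
have sub_nbh : setX (nbh_in eG S g) [set: TH] :|: fibre
               \subset nbh_in eGH (setX S [set: TH]) (g, h).
  apply/subsetP => -[g' h']; rewrite !inE /lexprod /=.
  case/orP=> [/andP[/andP[-> ->] _] // | /imsetP[h'' ]].
  by rewrite inE => ehh'' [-> ->]; rewrite gS eqxx ehh'' orbT.
apply: leq_trans (subset_leq_card sub_nbh).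
by rewrite cardsU disjoint_fibre cards0 subn0 fibre_card cardsX cardsT.
Qed.

Lemma is_gda_lexprod k (S : {set TG}) : 0 < #|TH| -> is_gda eG k S ->
  is_gda eGH (k * #|TH| + min_deg eH) (setX S [set: TH]).
Proof.
case/card_gt0P=> h0 _ /and3P[/set0Pn[g0 g0S] domS allianceS]; apply/and3P; split.
- by apply/set0Pn; exists (g0, h0); rewrite in_setX g0S in_setT.
- apply/forallP=> -[g h]; rewrite in_setX in_setT andbT; apply/implyP=> gS.
  have /existsP[u /andP[uS egu]] := implyP (forallP domS g) gS.
  by apply/existsP; exists (u, h); rewrite in_setX uS in_setT /lexprod /= egu.
- apply/forall_inP=> -[g h]; rewrite in_setX in_setT andbT => gS.
  have outside := subset_leq_card (lexprod_nbh_compl_sub h gS).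
  rewrite cardsX cardsT in outside.
  apply: leq_trans (lexprod_nbh_in_card h gS).
  rewrite addnA leq_add ?min_deg_le //.
  apply: leq_trans (leq_add outside (leqnn _)) _.
  by rewrite -mulnDl leq_mul2r (forall_inP allianceS g gS) orbT.
Qed.

End LexprodAlliance.

Theorem mainTheorem3 (TG TH : finType) (eG : rel TG) (eH : rel TH)
  (symG : symmetric eG) (irrG : irreflexive eG)
  (symH : symmetric eH) (irrH : irreflexive eH)
  (neH : 0 < #|TH|) (k : nat) :
  (forall SG : {set TG}, is_gda eG k SG ->
     is_gda (lexprod eG eH) (k * #|TH| + min_deg eH) (setX SG [set: TH]))
  /\ le_inf (gda_number (lexprod eG eH) (k * #|TH| + min_deg eH))
            (mul_inf #|TH| (gda_number eG k)).
Proof.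
split=> [SG|]; first exact: is_gda_lexprod.
case EG: (gda_number eG k) => [m|] /=; last by case: gda_number.
have [S gdaS Sm] := gda_number_attained EG.
have := gda_number_le (is_gda_lexprod eH irrG neH gdaS).
case: gda_number => //= p; rewrite cardsX cardsT => /leq_trans; apply.
by rewrite mulnC leq_mul2l Sm orbT.
Qed.
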